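(* Let $f(x)\in R_k[x;\Theta]$ be a monic irreducible divisor of $x^{np^s}-\lambda$ of degree $l$ such that $f(x)^j$ is central and divides $x^{np^s}-\lambda$ ($j\ge1$), and put $\mathcal R=R_k[x;\Theta]/\langle f(x)^j\rangle$. Then every left ideal $\mathcal I$ of $\mathcal R$ (equivalently every skew $(f^j,\Theta)$-polycyclic code of length $lj$ over $R_k$) is of the form \[ \mathcal I=\sum_{i=1}^{k}\mathcal R\Big(u^{i-1}a_i(x)+\sum_{t=1}^{k-i}u^{i-1+t}r_{i,t}(x)\Big), \] where: each $a_i(x)$ is $0$ or belongs to $\mathcal B$; $a_k(x)\mid_r a_i(x)$ for all $1\le i\le k-1$; each $r_{i,t}(x)$ is an element of $\mathbb{F}_{p^m}[x;\theta]/\langle \mu_k(f(x))^j\rangle$ (a polynomial over $\mathbb{F}_{p^m}$ of degree $<lj$); and for each $2\le i\le k$ with $a_i(x)\ne0$, $\max_{1\le t\le i-1}\deg r_{t,i-t}(x)<\deg a_i(x)$. Moreover, the polynomials $r_{i,t}(x)$ satisfying these conditions are unique.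
   Context: $p$ odd prime, $m,k,n,s\ge1$, $\gcd(n,p)=1$, $R_k=\mathbb{F}_{p^m}[u]/\langle u^k\rangle$. $\Theta\in\mathrm{Aut}(R_k)$ whose order divides $np^s$, $\theta=\Theta|_{\mathbb{F}_{p^m}}$; $R_k[x;\Theta]$ is the skew polynomial ring with $xa=\Theta(a)x$, and $\mathbb{F}_{p^m}[x;\theta]$ likewise. $\lambda\in R_k^*$ with $\Theta(\lambda)=\lambda$. $\mu_k:R_k\to\mathbb{F}_{p^m}$, $\sum_{i}a_iu^i\mapsto a_0$, extended coefficientwise to polynomials. $g\mid_r h$ means $h=qg$ for some polynomial $q$. $\mathcal B$ denotes the set of monic divisors of $\mu_k(f(x)^j)$ in $\mathbb{F}_{p^m}[x;\theta]$. *)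

From HB Require Import structures.
From mathcomp Require Import all_boot all_order all_algebra.
Set Implicit Arguments. Unset Strict Implicit. Unset Printing Implicit Defensive.
Import GRing.Theory.
Local Open Scope ring_scope.

(* A skew polynomial sum_i a_i x^i is stored as its coefficient list {poly R};
   only the multiplication differs: x a = sigma(a) x, i.e.
   (sum_i a_i x^i)(sum_j b_j x^j) = sum_{i,j} a_i sigma^i(b_j) x^(i+j). *)
Section Skew.
Variable R : comNzRingType.
Variable sigma : R -> R.

Definition skmul (a b : {poly R}) : {poly R} :=
  \sum_(i < size a) (a`_i *: 'X^i) * map_poly (iter i sigma) b.

Definition skpow (f : {poly R}) (j : nat) : {poly R} := iter j (skmul f) 1.

Definition rdivides (g h : {poly R}) : Prop := exists q, h = skmul q g.

Definition skunit (g : {poly R}) : Prop :=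
  exists h, skmul g h = 1 /\ skmul h g = 1.

Definition skirreducible (f : {poly R}) : Prop :=
  f != 0 /\ ~ skunit f /\
  forall g h, f = skmul g h -> skunit g \/ skunit h.

Definition skcentral (f : {poly R}) : Prop := forall g, skmul f g = skmul g f.

(* J is a left ideal of R[x;sigma] containing the two-sided ideal generated by
   the central element c; such J correspond exactly to the left ideals of
   R[x;sigma]/<c>. *)
Definition left_ideal_over (c : {poly R}) (J : {poly R} -> Prop) : Prop :=
  [/\ J 0,
      (forall a b, J a -> J b -> J (a + b)),
      (forall g a, J a -> J (skmul g a)) &
      (forall q, J (skmul q c))].
End Skew.

Notation Rk F k := {poly %/ ('X^k : {poly F})}.

Section Rk.
Variables (F : fieldType) (k : nat).

Definition uu : Rk F k := in_qpoly ('X^k : {poly F}) 'X.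
Definition embF (c : F) : Rk F k := in_qpoly ('X^k : {poly F}) c%:P.
Definition mu (a : Rk F k) : F := (polyn a)`_0.
Definition mu_poly (g : {poly Rk F k}) : {poly F} := map_poly mu g.
Definition emb_poly (g : {poly F}) : {poly Rk F k} := map_poly embF g.
(* theta = Theta restricted to F (Theta maps F into F) *)
Definition theta_of (Theta : Rk F k -> Rk F k) (c : F) : F := mu (Theta (embF c)).
End Rk.

Section Thm.
Variables (F : fieldType) (k : nat) (Theta : Rk F k -> Rk F k)
          (fj : {poly Rk F k}) (lj : nat).

Definition gen_elt (a : nat -> {poly F}) (r : nat -> nat -> {poly F}) (i : nat)
  : {poly Rk F k} :=
  (uu F k ^+ i.-1) *: emb_poly k (a i) +
  \sum_(1 <= t < (k - i).+1) (uu F k ^+ (i.-1 + t)) *: emb_poly k (r i t).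

(* h belongs to sum_{i=1}^k R (gen_elt i) + <f^j>, i.e. its class lies in the
   left ideal sum_i R (gen_elt i) of R = R_k[x;Theta]/<f^j> *)
Definition in_gen_ideal a r (h : {poly Rk F k}) : Prop :=
  exists (c : nat -> {poly Rk F k}) (q : {poly Rk F k}),
    h = \sum_(1 <= i < k.+1) skmul Theta (c i) (gen_elt a r i) + skmul Theta q fj.

Definition canonical_data (a : nat -> {poly F}) (r : nat -> nat -> {poly F}) : Prop :=
  [/\ (forall i, (1 <= i <= k)%N ->
         a i = 0 \/ (a i \is monic /\
                     rdivides (theta_of Theta) (a i) (mu_poly fj))),
      (forall i, (1 <= i <= k.-1)%N -> rdivides (theta_of Theta) (a k) (a i)),
      (forall i t, (1 <= i)%N -> (1 <= t <= k - i)%N -> (size (r i t) <= lj)%N) &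
      (forall i, (2 <= i <= k)%N -> a i != 0 ->
         forall t, (1 <= t <= i.-1)%N -> (size (r t (i - t)) < size (a i))%N)].
End Thm.

From HB Require Import structures.
From mathcomp Require Import all_boot all_order all_algebra.
From Stdlib Require Import ClassicalEpsilon.
From mathcomp Require Import zify ring.
Set Implicit Arguments. Unset Strict Implicit. Unset Printing Implicit Defensive.
Import GRing.Theory.
Local Open Scope ring_scope.

(* Let J be a left ideal of R_k[x; Theta] containing f^j, and for s < k let
   Tor_s(J) be the set of b in F[x; theta] such that u^s b + u^(s+1) h lies in J
   for some h.  Each Tor_s(J) is a left ideal of F[x; theta]: closure under x
   uses Theta(u) = u (e + O(u)) with e <> 0, which holds because Theta is
   bijective.  It contains mu(f^j) <> 0, hence is generated by its monic
   element a_(s+1) of least degree (right division by a monic polynomial), and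
   Tor_0(J) <= Tor_1(J) <= ... gives a_k |_r a_i.  An element u^s a_(s+1) + ...
   of J whose tail is reduced modulo a_(s+2), ..., a_k is the (s+1)-th
   generator; every element of J is peeled off u-adically by these generators.
   Uniqueness: the difference of two such generators lies in J, so its lowest
   nonzero u-adic coefficient lies in some Tor_T(J) while having degree below
   deg a_(T+1), hence vanishes. *)

(* [size p] can occur at several convertible carrier types, which [lia] would
   treat as unrelated atoms; generalizing them first identifies them. *)
Ltac size_lia :=
  repeat match goal with H : context [@size _ _] |- _ => revert H end;
  repeat match goal with |- context [@size ?T ?p] => move: (@size T p) end;
  intros; lia.

(** * Skew polynomials *)

Section SkewPoly.
Variables (R : comNzRingType) (sg : R -> R).

Lemma skmulE N (a b : {poly R}) : (size a <= N)%N ->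
  skmul sg a b = \sum_(i < N) (a`_i *: 'X^i) * map_poly (iter i sg) b.
Proof.
move=> aN; rewrite /skmul.
rewrite (big_ord_widen N (fun i => (a`_i *: 'X^i) * map_poly (iter i sg) b)) //.
rewrite big_mkcond /=; apply: eq_bigr => i _; case: ltnP => // ai.
by rewrite nth_default // scale0r mul0r.
Qed.

Lemma skmul0l b : skmul sg 0 b = 0.
Proof. by rewrite /skmul size_poly0 big_ord0. Qed.

Lemma skmulDl a1 a2 b : skmul sg (a1 + a2) b = skmul sg a1 b + skmul sg a2 b.
Proof.
pose N := maxn (size a1) (size a2).
rewrite (@skmulE N) ?size_polyD // (@skmulE N a1) ?leq_maxl // (@skmulE N a2) ?leq_maxr //.
by rewrite -big_split; apply: eq_bigr => i _; rewrite coefD scalerDl mulrDl.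
Qed.

Lemma skmulZl (c : R) a b : skmul sg (c *: a) b = c *: skmul sg a b.
Proof.
rewrite (@skmulE (size a)) ?size_scale_leq // scaler_sumr.
by apply: eq_bigr => i _; rewrite coefZ -scalerA scalerAl.
Qed.

Lemma skmulCl (c : R) b : skmul sg c%:P b = c *: b.
Proof.
rewrite (@skmulE 1) ?size_polyC_leq1 // big_ord1 coefC expr0 map_poly_id //.
by rewrite alg_polyC mul_polyC.
Qed.

Lemma skmul1l b : skmul sg 1 b = b.
Proof. by rewrite -polyC1 skmulCl scale1r. Qed.

Lemma skmulXl b : skmul sg 'X b = 'X * map_poly sg b.
Proof.
rewrite (@skmulE 2) ?size_polyX // big_ord_recr big_ord1 /= !coefX /=.
by rewrite scale0r mul0r add0r scale1r.
Qed.

Lemma size_skmul a b : (size (skmul sg a b) <= (size a + size b).-1)%N.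
Proof.
apply: leq_trans (size_sum _ _ _) _; apply/bigmax_leqP => i _.
apply: leq_trans (size_polyMleq _ _) _.
have sXi : (size (a`_i *: 'X^i) <= i.+1)%N.
  by rewrite (leq_trans (size_scale_leq _ _)) ?size_polyXn.
have : (size (map_poly (iter i sg) b) <= size b)%N by apply: size_poly.
have := ltn_ord i; size_lia.
Qed.

Hypothesis sg0 : sg 0 = 0.

Lemma coef_skmul a b n : (skmul sg a b)`_n =
  \sum_(i < size a) a`_i * (if (n < i)%N then 0 else iter i sg b`_(n - i)).
Proof.
rewrite coef_sum; apply: eq_bigr => i _.
rewrite -scalerAl coefZ coefXnM; case: ltnP => _ //.
by rewrite coef_map_id0 // iter_fix.
Qed.

Hypothesis sg1 : sg 1 = 1.

Section MonicDivisor.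
Variable b : {poly R}.
Hypothesis monic_b : b \is monic.

Lemma coef_skmul_monic a : (skmul sg a b)`_((size a + size b).-2) = lead_coef a.
Proof.
have [->|a0] := eqVneq a 0; first by rewrite skmul0l coef0 lead_coef0.
have sb : (0 < size b)%N by rewrite size_poly_gt0 monic_neq0.
rewrite coef_skmul lead_coefE (polySpred a0) big_ord_recr /= big1 ?add0r.
  rewrite ifF; last by apply/negbTE; rewrite -leqNgt; size_lia.
  have -> : (((size a).-1 + size b).-1 - (size a).-1)%N = (size b).-1 :> nat by size_lia.
  by move/monicP: monic_b; rewrite lead_coefE => ->; rewrite iter_fix ?mulr1.
move=> i _; case: ltnP => _; first by rewrite mulr0.
by rewrite [b`_ _]nth_default ?iter_fix ?mulr0 //; have := ltn_ord i; size_lia.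
Qed.

Lemma size_skmul_monic a : a != 0 -> size (skmul sg a b) = (size a + size b).-1.
Proof.
move=> a0; apply/eqP; rewrite eqn_leq size_skmul /=.
have sa : (0 < size a)%N by rewrite size_poly_gt0.
have sb : (0 < size b)%N by rewrite size_poly_gt0 monic_neq0.
have : (skmul sg a b)`_((size a + size b).-2) != 0.
  by rewrite coef_skmul_monic lead_coef_eq0.
by apply: contraR; rewrite -ltnNge => small; rewrite nth_default //; size_lia.
Qed.

Lemma lead_coef_skmul_monic a : lead_coef (skmul sg a b) = lead_coef a.
Proof.
have [->|a0] := eqVneq a 0; first by rewrite skmul0l.
have sa : (0 < size a)%N by rewrite size_poly_gt0.
by rewrite lead_coefE size_skmul_monic // -coef_skmul_monic; congr _`_ _; size_lia.
Qed.

Lemma skmul_monic a : a \is monic -> skmul sg a b \is monic.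
Proof. by rewrite !monicE lead_coef_skmul_monic. Qed.

Lemma skmul_monic_small q : (size (skmul sg q b) < size b)%N -> skmul sg q b = 0.
Proof.
have [->|q0] := eqVneq q 0; first by rewrite skmul0l.
have : (0 < size q)%N by rewrite size_poly_gt0.
by rewrite size_skmul_monic //; size_lia.
Qed.

Lemma skew_edivp p : exists q r, p = skmul sg q b + r /\ (size r < size b)%N.
Proof.
have sb : (0 < size b)%N by rewrite size_poly_gt0 monic_neq0.
elim: {p}(size p) {-2}p (leqnn (size p)) => [|n IHn] p sp.
  by exists 0, p; rewrite skmul0l add0r; split => //; size_lia.
have [small|] := ltnP (size p) (size b); first by exists 0, p; rewrite skmul0l add0r.
move=> bp; have p0 : p != 0 by rewrite -size_poly_gt0; size_lia.
pose q0 := (lead_coef p)%:P * 'X^(size p - size b).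
have sq0 : size q0 = (size p - size b).+1.
  rewrite size_Mmonic ?monicXn ?polyC_eq0 ?lead_coef_eq0 //.
  by rewrite size_polyC lead_coef_eq0 p0 size_polyXn.
have q0_0 : q0 != 0 by rewrite -size_poly_gt0 sq0.
have lq0 : lead_coef q0 = lead_coef p by rewrite lead_coef_Mmonic ?monicXn // lead_coefC.
have sP : size (skmul sg q0 b) = size p by rewrite size_skmul_monic // sq0; size_lia.
pose p' := p - skmul sg q0 b.
have top : p'`_(size p).-1 = 0.
  rewrite coefB -lead_coefE -lq0 -coef_skmul_monic sq0.
  have -> : ((size p - size b).+1 + size b).-2 = (size p).-1 by size_lia.
  by rewrite subrr.
have sp' : (size p' <= n)%N.
  have le_p'p : (size p' <= size p)%N.
    by rewrite (leq_trans (size_polyD _ _)) // size_polyN sP maxnn.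
  suff : (size p' <= (size p).-1)%N by size_lia.
  apply/leq_sizeP => i; rewrite leq_eqVlt => /orP [/eqP <- //|lt_i].
  by rewrite nth_default //; size_lia.
have [q [r [e sr]]] := IHn _ sp'.
by exists (q + q0), r; rewrite skmulDl addrAC -e /p' subrK.
Qed.
End MonicDivisor.

Lemma skpow_monic_size f n : f \is monic ->
  skpow sg f n \is monic /\ size (skpow sg f n) = ((size f).-1 * n).+1.
Proof.
move=> monic_f; have f0 : (0 < size f)%N by rewrite size_poly_gt0 monic_neq0.
elim: n => [|n [monic_fn size_fn]]; first by rewrite monic1 size_poly1 muln0.
split; first exact: skmul_monic.
by rewrite size_skmul_monic ?monic_neq0 // size_fn mulnS; size_lia.
Qed.
End SkewPoly.

(** * Left ideals of F[x; theta] *)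

Lemma ex_minimizer (T : Type) (m : T -> nat) (P : T -> Prop) x :
  P x -> exists2 y, P y & forall z, P z -> (m y <= m z)%N.
Proof.
elim: {x}(m x) {-2}x (leqnn (m x)) => [|n IHn] x mx Px.
  by exists x => // z _; move: mx; rewrite leqn0 => /eqP ->.
have [[y Py lt_yx]|no_smaller] := classic (exists2 y, P y & (m y < m x)%N).
  by apply: (IHn y) => //; lia.
exists x => // z Pz; rewrite leqNgt; apply/negP => lt_zx.
by apply: no_smaller; exists z.
Qed.

Section SkewLeftIdeal.
Variables (F : fieldType) (th : F -> F).
Hypotheses (th0 : th 0 = 0) (th1 : th 1 = 1).
Variable I : {poly F} -> Prop.
Hypotheses (IB : forall a b, I a -> I b -> I (a - b))
           (IM : forall q a, I a -> I (skmul th q a)).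

Lemma skew_lideal_monic_generator b : I b -> b != 0 ->
  exists a, [/\ a \is monic, I a, (size a <= size b)%N &
                forall c, I c -> exists q, c = skmul th q a].
Proof.
move=> Ib b0.
have [a0 [Ia0 a0_0] a0_min] :=
  @ex_minimizer _ (fun a : {poly F} => size a) (fun a => I a /\ a != 0) b (conj Ib b0).
have la0 : lead_coef a0 != 0 by rewrite lead_coef_eq0.
pose a := (lead_coef a0)^-1 *: a0.
have sa : size a = size a0 by rewrite size_scale ?invr_eq0.
have ma : a \is monic by rewrite monicE lead_coefZ mulVf.
have Ia : I a by rewrite /a -(skmulCl th); apply: IM.
exists a; split => //; first by rewrite sa; apply: a0_min.
move=> c Ic; have [q [r [e sr]]] := skew_edivp th0 th1 ma c.
exists q; have [r0|r_neq0] := eqVneq r 0; first by rewrite e r0 addr0.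
have Ir : I r.
  have -> : r = c - skmul th q a by rewrite e addrAC subrr add0r.
  exact/IB/IM.
by have := a0_min r (conj Ir r_neq0); rewrite -sa; size_lia.
Qed.
End SkewLeftIdeal.

(** * The chain ring R_k = F[u]/(u^k) *)

Section Morphisms.
Variables (F : fieldType) (k : nat).
Local Notation R := (Rk F k).
Local Notation in_R := (in_qpoly ('X^k : {poly F})).

Lemma mu_in_qpoly p : mu (in_R p) = p`_0.
Proof.
rewrite /mu /= mk_monic_Xn.
have := Pdiv.RingMonic.rdivp_eq (monicXn F k.-1.+1) p.
by move=> {2}->; rewrite coefD coefMXn add0r.
Qed.

Lemma in_qpoly_polyn (a : R) : in_R (polyn a) = a.
Proof. by apply: val_inj; apply: Pdiv.CommonRing.rmodp_small; apply: size_mk_monic. Qed.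

Lemma mu_is_zmod_morphism : zmod_morphism (@mu F k).
Proof. by move=> a b; rewrite /mu /= coefB. Qed.

Lemma mu_is_monoid_morphism : monoid_morphism (@mu F k).
Proof.
split; first by rewrite -(in_qpoly1 ('X^k : {poly F})) mu_in_qpoly coef1.
by move=> a b; rewrite -[a]in_qpoly_polyn -[b]in_qpoly_polyn -rmorphM !mu_in_qpoly coef0M.
Qed.

HB.instance Definition _ :=
  GRing.isZmodMorphism.Build _ _ (@mu F k) mu_is_zmod_morphism.
HB.instance Definition _ :=
  GRing.isMonoidMorphism.Build _ _ (@mu F k) mu_is_monoid_morphism.

Lemma embF_is_zmod_morphism : zmod_morphism (@embF F k).
Proof. by move=> a b; rewrite /embF polyCB rmorphB. Qed.

Lemma embF_is_monoid_morphism : monoid_morphism (@embF F k).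
Proof. by split => [|a b]; rewrite /embF ?polyCM ?rmorph1 ?rmorphM. Qed.

HB.instance Definition _ :=
  GRing.isZmodMorphism.Build _ _ (@embF F k) embF_is_zmod_morphism.
HB.instance Definition _ :=
  GRing.isMonoidMorphism.Build _ _ (@embF F k) embF_is_monoid_morphism.

Lemma emb_poly_is_zmod_morphism : zmod_morphism (@emb_poly F k).
Proof. by move=> p q; rewrite /emb_poly rmorphB. Qed.

Lemma emb_poly_is_monoid_morphism : monoid_morphism (@emb_poly F k).
Proof. by split => [|p q]; rewrite /emb_poly ?rmorph1 ?rmorphM. Qed.

HB.instance Definition _ :=
  GRing.isZmodMorphism.Build _ _ (@emb_poly F k) emb_poly_is_zmod_morphism.
HB.instance Definition _ :=
  GRing.isMonoidMorphism.Build _ _ (@emb_poly F k) emb_poly_is_monoid_morphism.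

Lemma mu_poly_is_zmod_morphism : zmod_morphism (@mu_poly F k).
Proof. by move=> p q; rewrite /mu_poly rmorphB. Qed.

Lemma mu_poly_is_monoid_morphism : monoid_morphism (@mu_poly F k).
Proof. by split => [|p q]; rewrite /mu_poly ?rmorph1 ?rmorphM. Qed.

HB.instance Definition _ :=
  GRing.isZmodMorphism.Build _ _ (@mu_poly F k) mu_poly_is_zmod_morphism.
HB.instance Definition _ :=
  GRing.isMonoidMorphism.Build _ _ (@mu_poly F k) mu_poly_is_monoid_morphism.

Variable Theta : {rmorphism R -> R}.

Lemma theta_of_is_zmod_morphism : zmod_morphism (theta_of Theta).
Proof. by move=> a b; rewrite /theta_of !rmorphB. Qed.

Lemma theta_of_is_monoid_morphism : monoid_morphism (theta_of Theta).
Proof. by split => [|a b]; rewrite /theta_of ?rmorph1 ?rmorphM. Qed.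

HB.instance Definition _ :=
  GRing.isZmodMorphism.Build _ _ (theta_of Theta) theta_of_is_zmod_morphism.
HB.instance Definition _ :=
  GRing.isMonoidMorphism.Build _ _ (theta_of Theta) theta_of_is_monoid_morphism.

(* Specialisations of [rmorph0] and [rmorphB]: rewriting with the generic
   lemmas is very slow on polynomials over R_k. *)
Lemma emb_poly0 : emb_poly k (0 : {poly F}) = 0.
Proof. exact: rmorph0. Qed.

Lemma emb_polyB (p q : {poly F}) : emb_poly k (p - q) = emb_poly k p - emb_poly k q.
Proof. exact: rmorphB. Qed.
End Morphisms.

Section TruncatedPolyRing.
Variables (F : fieldType) (k : nat).
Local Notation R := (Rk F k).
Local Notation in_R := (in_qpoly ('X^k : {poly F})).
Local Notation u := (uu F k).
Local Notation emb := (@emb_poly F k).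

Lemma mu_embF (c : F) : mu (embF k c) = c.
Proof. by rewrite /embF mu_in_qpoly coefC. Qed.

Lemma mu_u : mu u = 0.
Proof. by rewrite mu_in_qpoly coefX. Qed.

Lemma u_nilpotent : (0 < k)%N -> u ^+ k = 0.
Proof.
move=> k_gt0; rewrite -rmorphXn; apply: val_inj => /=.
by rewrite mk_monic_Xn prednK // Pdiv.RingMonic.rmodpp ?monicXn.
Qed.

Lemma u_neq0 : (1 < k)%N -> u != 0.
Proof.
move=> k_gt1; apply/eqP => /(congr1 (fun a : R => (polyn a)`_1)).
rewrite /= mk_monic_Xn Pdiv.CommonRing.rmodp_small ?coefX ?coef0 /=.
  by move/eqP; rewrite oner_eq0.
by rewrite size_polyXn (@size_polyX F) prednK // ltnW.
Qed.

Definition dec (a : R) : R := in_R (drop_poly 1 (polyn a)).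

Lemma decE a : a = embF k (mu a) + u * dec a.
Proof.
rewrite /embF /uu /dec -rmorphM -in_qpolyD mulrC.
have -> : (mu a)%:P = take_poly 1 (polyn a).
  by apply/polyP => -[|i]; rewrite coef_take_poly coefC.
by rewrite poly_take_drop in_qpoly_polyn.
Qed.

Lemma dec0 : dec 0 = 0.
Proof. by rewrite /dec drop_poly0r in_qpoly0. Qed.

Definition pdec (P : {poly R}) : {poly R} := map_poly dec P.

Lemma pdecE P : P = emb (mu_poly P) + u *: pdec P.
Proof.
apply/polyP => i; rewrite coefD coefZ !coef_map /= coef_map_id0 ?dec0 //.
exact: decE.
Qed.

Lemma emb_mulX p : emb ('X * p) = 'X * emb p.
Proof. by rewrite rmorphM /= /emb_poly map_polyX. Qed.

Lemma scale_sub_emb_add_u s Q b h :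
  u ^+ s *: Q - u ^+ s *: (emb b + u *: h) =
  u ^+ s *: emb (mu_poly Q - b) + u ^+ s.+1 *: (pdec Q - h).
Proof.
rewrite {1}(pdecE Q) emb_polyB exprSr -scalerA -!scalerBr -scalerDr.
by rewrite opprD addrACA scalerBr.
Qed.

Lemma sum_scale_u_factor m n (X : nat -> {poly Rk F k}) :
  \sum_(m <= T < n) u ^+ T *: X T = u ^+ m *: \sum_(m <= T < n) u ^+ (T - m) *: X T.
Proof.
rewrite scaler_sumr; apply: eq_big_nat => T /andP [le_mT _].
by rewrite scalerA -exprD subnKC.
Qed.
End TruncatedPolyRing.

Section SkewTruncated.
Variables (F : fieldType) (k : nat).
Hypothesis k_gt0 : (0 < k)%N.
Variable Theta : {rmorphism Rk F k -> Rk F k}.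
Local Notation R := (Rk F k).
Local Notation u := (uu F k).
Local Notation th := (theta_of Theta).

Lemma mu_Theta_u : mu (Theta u) = 0.
Proof.
have : mu (Theta u) ^+ k = 0 by rewrite -2!rmorphXn u_nilpotent // !rmorph0.
by move/eqP; rewrite expf_eq0 => /andP [_ /eqP].
Qed.

Lemma mu_Theta a : mu (Theta a) = th (mu a).
Proof. by rewrite {1}(decE a) !rmorphD !rmorphM /= mu_Theta_u mul0r addr0. Qed.

Definition u_cofactor : R := dec (Theta u).
Local Notation v := u_cofactor.

Lemma Theta_u : Theta u = u * v.
Proof. by rewrite {1}(decE (Theta u)) mu_Theta_u rmorph0 add0r. Qed.

(* Otherwise Theta u lies in u^2 R_k; as Theta is onto, u = u z with z
   nilpotent, so u = 0. *)
Lemma mu_u_cofactor_neq0 : bijective Theta -> (1 < k)%N -> mu v != 0.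
Proof.
case=> Theta' ThetaK Theta'K k_gt1; apply/eqP => mu_v0.
have vE : v = u * dec v by rewrite {1}(decE v) mu_v0 rmorph0 add0r.
pose w := Theta' u.
have uE : u = Theta w by rewrite Theta'K.
have mu_w0 : mu w = 0.
  by apply/eqP; rewrite -(fmorph_eq0 th) /= -mu_Theta -uE mu_u.
have wE : w = u * dec w by rewrite {1}(decE w) mu_w0 rmorph0 add0r.
pose z := u * (dec v * Theta (dec w)).
have uz : u = u * z by rewrite {1}uE wE rmorphM Theta_u vE /z; ring.
have uzn n : u = u * z ^+ n.
  by elim: n => [|n IHn]; rewrite ?mulr1 // exprS mulrA -uz.
move: (uzn k); rewrite exprMn u_nilpotent // mul0r mulr0 => /eqP.
by apply/negP: (u_neq0 F k_gt1).
Qed.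
End SkewTruncated.

(** * Torsion codes *)

Section Torsion.
Variables (F : fieldType) (k : nat).
Hypothesis k_gt0 : (0 < k)%N.
Variable Theta : {rmorphism Rk F k -> Rk F k}.
Hypothesis Theta_bij : bijective Theta.
Local Notation R := (Rk F k).
Local Notation u := (uu F k).
Local Notation th := (theta_of Theta).
Local Notation emb := (@emb_poly F k).
Local Notation v := (u_cofactor Theta).

Lemma scale_emb_add_u (c : R) b Q :
  c *: (emb b + u *: Q) = emb (mu c *: b) + u *: (dec c *: emb b + c *: Q).
Proof.
have cE := decE c.
rewrite /emb_poly map_polyZ -!mul_polyC; move: (mu c) (dec c) cE => c0 c1 ->.
rewrite !rmorphD !rmorphM /=; ring.
Qed.

Lemma mu_poly_map_Theta_emb b : mu_poly (map_poly Theta (emb b)) = map_poly th b.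
Proof. by apply/polyP => i; rewrite /mu_poly /emb_poly !coef_map. Qed.

Lemma map_Theta_emb_add_u b h : map_poly Theta (emb b + u *: h) =
  emb (map_poly th b) + u *: (pdec (map_poly Theta (emb b)) + v *: map_poly Theta h).
Proof.
rewrite rmorphD /= map_polyZ Theta_u // scalerDr scalerA addrA; congr (_ + _).
by rewrite -mu_poly_map_Theta_emb; apply: pdecE.
Qed.

(* Closure under scalars and left multiplication by x, rather than by all of
   R_k[x; Theta]: without associativity of [skmul], this is what the principal
   left ideals [fun P => exists c, P = skmul Theta c G] can be shown to satisfy. *)
Definition lideal_closed (J : {poly R} -> Prop) :=
  [/\ J 0, (forall a b, J a -> J b -> J (a + b)),
      (forall (c : R) a, J a -> J (c *: a)) &
      (forall a, J a -> J (skmul Theta 'X a))].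

(* The paper's torsion code Tor_(s+1)(J). *)
Definition Tor (J : {poly R} -> Prop) s (b : {poly F}) :=
  exists h, J (u ^+ s *: (emb b + u *: h)).

Variable J : {poly R} -> Prop.
Hypothesis J_closed : lideal_closed J.

Lemma Tor0 s : Tor J s 0.
Proof. by case: J_closed => J0 _ _ _; exists 0; rewrite emb_poly0 scaler0 addr0 scaler0. Qed.

Lemma TorD s b1 b2 : Tor J s b1 -> Tor J s b2 -> Tor J s (b1 + b2).
Proof.
case: J_closed => _ JD _ _ [h1 J1] [h2 J2]; exists (h1 + h2).
have -> : u ^+ s *: (emb (b1 + b2) + u *: (h1 + h2)) =
    u ^+ s *: (emb b1 + u *: h1) + u ^+ s *: (emb b2 + u *: h2).
  by rewrite -scalerDr rmorphD /= [u *: _]scalerDr addrACA.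
exact: JD.
Qed.

Lemma TorZ s (c : F) b : Tor J s b -> Tor J s (c *: b).
Proof.
case: J_closed => _ _ JZ _ [h Jh].
move: (JZ (embF k c) _ Jh); rewrite scalerA mulrC -scalerA scale_emb_add_u mu_embF.
by move=> Jc; exists (dec (embF k c) *: emb b + embF k c *: h).
Qed.

Lemma TorN s b : Tor J s b -> Tor J s (- b).
Proof. by rewrite -scaleN1r; apply: TorZ. Qed.

Lemma TorB s b1 b2 : Tor J s b1 -> Tor J s b2 -> Tor J s (b1 - b2).
Proof. by move=> T1 T2; apply/TorD/TorN. Qed.

Lemma Tor_mu_poly s Q : J (u ^+ s *: Q) -> Tor J s (mu_poly Q).
Proof. by rewrite {1}(pdecE Q); exists (pdec Q). Qed.

Lemma TorS s b : Tor J s b -> Tor J s.+1 b.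
Proof.
case: J_closed => _ _ JZ _ [h Jh]; exists h.
by rewrite exprS -scalerA; apply: JZ.
Qed.

Lemma Tor_leq s t b : (s <= t)%N -> Tor J s b -> Tor J t b.
Proof. by move/subnK <-; elim: (t - s)%N => // n IHn /IHn /TorS. Qed.

(* x (u^s b + u^(s+1) h) = u^s e^s x theta(b) + u^(s+1) (...), where
   e = mu (u_cofactor Theta) is nonzero whenever s > 0. *)
Lemma TorX s b : (s < k)%N -> Tor J s b -> Tor J s ('X * map_poly th b).
Proof.
move=> lt_sk [h Jh]; case: J_closed => _ _ _ JX.
have e_neq0 : mu (v ^+ s) != 0.
  case: s lt_sk {Jh} => [|s] lt_sk; first by rewrite rmorph1 oner_neq0.
  by rewrite rmorphXn /= expf_neq0 // mu_u_cofactor_neq0 //; apply: leq_ltn_trans lt_sk.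
suff : Tor J s ('X * (mu (v ^+ s) *: map_poly th b)).
  by rewrite -scalerAr => /(TorZ (mu (v ^+ s))^-1); rewrite scalerA mulVf // scale1r.
have := JX _ Jh; rewrite skmulXl map_polyZ rmorphXn /= Theta_u // exprMn -scalerA.
rewrite map_Theta_emb_add_u scale_emb_add_u -scalerAr mulrDr -scalerAr -emb_mulX.
by move=> JXh; eexists; apply: JXh.
Qed.

Lemma TorXn s b i : (s < k)%N -> Tor J s b ->
  Tor J s ('X^i * map_poly (iter i th) b).
Proof.
move=> lt_sk Tb; elim: i => [|i IHi]; first by rewrite expr0 mul1r map_poly_id.
have -> : 'X^(i.+1) * map_poly (iter i.+1 th) b =
          'X * map_poly th ('X^i * map_poly (iter i th) b).
  by rewrite rmorphM /= map_polyXn -map_poly_comp exprS mulrA.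
exact: TorX.
Qed.

Lemma Tor_skmul s q b : (s < k)%N -> Tor J s b -> Tor J s (skmul th q b).
Proof.
move=> lt_sk Tb; apply: (big_ind (Tor J s)); [exact: Tor0 | exact: TorD |].
by move=> i _; rewrite -scalerAl; apply/TorZ/TorXn.
Qed.
End Torsion.

Lemma lideal_closed_principal (F : fieldType) (k : nat)
    (Theta : {rmorphism Rk F k -> Rk F k}) (G : {poly Rk F k}) :
  lideal_closed Theta (fun P => exists c, P = skmul Theta c G).
Proof.
split.
- by exists 0; rewrite skmul0l.
- by move=> _ _ [c1 ->] [c2 ->]; exists (c1 + c2); rewrite skmulDl.
- by move=> e _ [c ->]; exists (e *: c); rewrite skmulZl.
move=> _ [c ->]; exists ('X * map_poly Theta c).
rewrite skmulXl [RHS](@skmulE _ _ (size c).+1); last first.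
  by rewrite (leq_trans (size_polyMleq _ _)) // size_polyX; apply: size_poly.
rewrite big_ord_recl coefXM eqxx scale0r mul0r add0r rmorph_sum mulr_sumr.
apply: eq_bigr => i _; rewrite coefXM /= coef_map rmorphM /= map_polyZ /=.
by rewrite map_polyXn -map_poly_comp mulrA -scalerAr exprS.
Qed.

(** * Canonical generators of a left ideal of R_k[x; Theta]/(f^j) *)

Section StructureTheorem.
Variables (F : fieldType) (k : nat).
Hypothesis k_gt0 : (0 < k)%N.
Variable Theta : {rmorphism Rk F k -> Rk F k}.
Hypothesis Theta_bij : bijective Theta.
Variable fj : {poly Rk F k}.
Hypothesis fj_monic : fj \is monic.
Variable J : {poly Rk F k} -> Prop.
Hypothesis J_ideal : left_ideal_over Theta fj J.
Local Notation R := (Rk F k).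
Local Notation u := (uu F k).
Local Notation th := (theta_of Theta).
Local Notation emb := (@emb_poly F k).

Lemma J0 : J 0.
Proof. by case: J_ideal. Qed.

Lemma JD a b : J a -> J b -> J (a + b).
Proof. by case: J_ideal => _ addJ _ _; apply: addJ. Qed.

Lemma JM g a : J a -> J (skmul Theta g a).
Proof. by case: J_ideal => _ _ mulJ _; apply: mulJ. Qed.

Lemma JZ (c : R) a : J a -> J (c *: a).
Proof. by rewrite -(skmulCl Theta); apply: JM. Qed.

Lemma JB a b : J a -> J b -> J (a - b).
Proof. by move=> Ja Jb; rewrite -scaleN1r; apply/JD/JZ. Qed.

Lemma J_fj : J fj.
Proof. by case: J_ideal => _ _ _ /(_ 1); rewrite skmul1l. Qed.

Lemma J_closed : lideal_closed Theta J.
Proof. by split; [exact: J0 | exact: JD | exact: JZ | move=> a; apply: JM]. Qed.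

Lemma Tor_mu_fj s : Tor J s (mu_poly fj).
Proof. by apply: Tor_mu_poly; apply/JZ/J_fj. Qed.

Lemma mu_poly_fj_monic : mu_poly fj \is monic.
Proof.
rewrite monicE /mu_poly lead_coef_map_id0 ?rmorph0 // (monicP fj_monic) rmorph1 //.
exact: oner_neq0.
Qed.

Definition torsion_generator s (a : {poly F}) :=
  [/\ a \is monic, Tor J s a, (size a <= size (mu_poly fj))%N &
      forall b, Tor J s b -> exists q, b = skmul th q a].

Lemma exists_torsion_generator s : (s < k)%N -> exists a, torsion_generator s a.
Proof.
move=> lt_sk; apply: (@skew_lideal_monic_generator _ _ (rmorph0 _) (rmorph1 _) (Tor J s)).
- exact: (TorB J_closed).
- by move=> q b; apply: (Tor_skmul k_gt0 Theta_bij J_closed).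
- exact: Tor_mu_fj.
- exact: monic_neq0 mu_poly_fj_monic.
Qed.

Lemma exists_torsion_generators :
  exists A, forall s, (s < k)%N -> torsion_generator s (A s).
Proof.
apply: (choice (fun s a => (s < k)%N -> torsion_generator s a)) => s.
have [/exists_torsion_generator [a Ha]|_] := ltnP s k; first by exists a.
by exists 0.
Qed.

Variable A : nat -> {poly F}.
Hypothesis A_gen : forall s, (s < k)%N -> torsion_generator s (A s).

Lemma reduce_mod_torsion_generators s P Q : (s <= k)%N -> J (P + u ^+ s *: Q) ->
  exists r : nat -> {poly F},
    (forall t, (s <= t < k)%N -> (size (r t) < size (A t))%N) /\
    J (P + \sum_(s <= t < k) u ^+ t *: emb (r t)).
Proof.
move/subnKC; move: (k - s)%N => m; elim: m s P Q => [|m IHm] s P Q ksm JPQ.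
  rewrite addn0 in ksm; exists (fun=> 0); split => [t|]; first by rewrite ksm; lia.
  by move: JPQ; rewrite ksm u_nilpotent // scale0r big_geq.
have lt_sk : (s < k)%N by lia.
have [monicA TorA _ _] := A_gen lt_sk.
have [q [rem [eQ small_rem]]] := @skew_edivp _ th (rmorph0 _) (rmorph1 _) _ monicA (mu_poly Q).
have [h Jh] := Tor_skmul k_gt0 Theta_bij J_closed q lt_sk TorA.
have J' : J ((P + u ^+ s *: emb rem) + u ^+ s.+1 *: (pdec Q - h)).
  have -> : rem = mu_poly Q - skmul th q (A s) by rewrite eQ [_ + rem]addrC addrK.
  by rewrite -addrA -scale_sub_emb_add_u addrA; apply: JB.
have [r [small_r Jr]] := IHm s.+1 _ _ (etrans (addSnnS s m) ksm) J'.
exists (fun t => if t == s then rem else r t); split.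
  move=> t /andP [le_st lt_tk]; case: eqVneq => [-> //|ne_ts].
  by apply: small_r; rewrite lt_tk andbT ltn_neqAle eq_sym ne_ts.
rewrite big_ltn // eqxx addrA (eq_big_nat _ _ (F2 := fun t => u ^+ t *: emb (r t))) //.
by move=> t /andP [lt_st _]; rewrite ifN // neq_ltn lt_st orbT.
Qed.

Definition generator s (r : nat -> {poly F}) : {poly R} :=
  u ^+ s *: emb (A s) + \sum_(s.+1 <= t < k) u ^+ t *: emb (r t).

Definition reduced_generator s (r : nat -> {poly F}) :=
  (forall t, (s < t < k)%N -> (size (r t) < size (A t))%N) /\ J (generator s r).

Lemma exists_reduced_generators :
  exists RR, forall s, (s < k)%N -> reduced_generator s (RR s).
Proof.
apply: (choice (fun s r => (s < k)%N -> reduced_generator s r)) => s.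
have [lt_sk|_] := ltnP s k; last by exists (fun=> 0).
have [_ [h Jh] _ _] := A_gen lt_sk.
move: Jh; rewrite scalerDr scalerA -exprSr => Jh.
by have [r Hr] := reduce_mod_torsion_generators lt_sk Jh; exists r.
Qed.

Variable RR : nat -> nat -> {poly F}.
Hypothesis RR_red : forall s, (s < k)%N -> reduced_generator s (RR s).

Lemma generatorE s : generator s (RR s) =
  u ^+ s *: (emb (A s) + u *: \sum_(s.+1 <= t < k) u ^+ (t - s.+1) *: emb (RR s t)).
Proof. by rewrite /generator sum_scale_u_factor scalerDr scalerA -exprSr. Qed.

Lemma Tor_principal_generator s :
  Tor (fun P => exists c, P = skmul Theta c (generator s (RR s))) s (A s).
Proof. by eexists; exists 1; rewrite skmul1l generatorE. Qed.

Lemma J_span_generators s Q : (s <= k)%N -> J (u ^+ s *: Q) ->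
  exists c : nat -> {poly R},
    u ^+ s *: Q = \sum_(s <= i < k) skmul Theta (c i) (generator i (RR i)).
Proof.
move/subnKC; move: (k - s)%N => m; elim: m s Q => [|m IHm] s Q ksm JQ.
  rewrite addn0 in ksm; exists (fun=> 0).
  by rewrite big_geq ksm // u_nilpotent // scale0r.
have lt_sk : (s < k)%N by lia.
have [_ _ _ genA] := A_gen lt_sk.
have [q eQ] := genA _ (Tor_mu_poly JQ).
have [h [c0 eG]] : Tor (fun P => exists c, P = skmul Theta c (generator s (RR s))) s
                       (mu_poly Q).
  rewrite eQ; exact: (Tor_skmul k_gt0 Theta_bij (lideal_closed_principal _ _) q lt_sk
                             (Tor_principal_generator s)).
have JG : J (generator s (RR s)) by case: (RR_red lt_sk).
have eQh := scale_sub_emb_add_u s Q (mu_poly Q) h.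
rewrite subrr emb_poly0 scaler0 add0r eG in eQh.
have J' : J (u ^+ s.+1 *: (pdec Q - h)) by rewrite -eQh; apply/JB/JM.
have [c' ec'] := IHm s.+1 _ (etrans (addSnnS s m) ksm) J'.
exists (fun i => if i == s then c0 else c' i).
rewrite big_ltn // eqxx (eq_big_nat _ _ (F2 := fun i => skmul Theta (c' i) (generator i (RR i)))).
  by rewrite -ec' -eQh addrC subrK.
by move=> i /andP [lt_si _]; rewrite ifN // neq_ltn lt_si orbT.
Qed.

Lemma J_sum_vanish s d : (s <= k)%N ->
  J (\sum_(s <= T < k) u ^+ T *: emb (d T)) ->
  (forall T, (s <= T < k)%N -> (size (d T) < size (A T))%N) ->
  forall T, (s <= T < k)%N -> d T = 0.
Proof.
move/subnKC; move: (k - s)%N => m; elim: m s => [|m IHm] s ksm Jd small_d T rangeT.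
  by move: rangeT; rewrite -ksm addn0; lia.
have lt_sk : (s < k)%N by lia.
have d_s0 : d s = 0.
  have [monicA _ _ genA] := A_gen lt_sk.
  move: Jd; rewrite big_ltn // sum_scale_u_factor exprSr -scalerA -scalerDr => Jd.
  have [q eq] := genA _ (ex_intro _ _ Jd).
  rewrite eq; apply: (skmul_monic_small (rmorph0 _) (rmorph1 _) monicA).
  by rewrite -eq; apply: small_d; rewrite leqnn.
have [-> //|ne_Ts] := eqVneq T s.
have Jd' : J (\sum_(s.+1 <= T < k) u ^+ T *: emb (d T)).
  by move: Jd; rewrite big_ltn // d_s0 emb_poly0 scaler0 add0r.
apply: (IHm s.+1 (etrans (addSnnS s m) ksm) Jd').
  by move=> t /andP [lt_st lt_tk]; apply: small_d; rewrite lt_tk andbT ltnW.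
by case/andP: rangeT => le_sT lt_Tk; rewrite lt_Tk andbT ltn_neqAle eq_sym ne_Ts.
Qed.

(* The paper's a_i and r_(i,t), indexed from 1. *)
Definition gen_a i := A i.-1.
Definition gen_r i t := RR i.-1 (i.-1 + t).

Lemma gen_eltE s r : (s < k)%N ->
  gen_elt k gen_a r s.+1 = u ^+ s *: emb (A s) +
    \sum_(s.+1 <= T < k) u ^+ T *: emb (r s.+1 (T - s)%N).
Proof.
move=> lt_sk; congr (_ + _); rewrite [in RHS](_ : s.+1 = 1 + s)%N // big_addn.
have -> : (k - s = (k - s.+1).+1)%N by lia.
by apply: eq_big_nat => t _; rewrite addnK addnC.
Qed.

Lemma gen_elt_generator s : (s < k)%N -> gen_elt k gen_a gen_r s.+1 = generator s (RR s).
Proof.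
move=> lt_sk; rewrite gen_eltE //; congr (_ + _); apply: eq_big_nat => T /andP [lt_sT _].
by rewrite /gen_r /= subnKC // ltnW.
Qed.

Lemma canonical_data_gen lj : (size (mu_poly fj) <= lj.+1)%N ->
  canonical_data Theta fj lj gen_a gen_r.
Proof.
move=> size_fj; split.
- case=> [//|s] /= lt_sk; have [monicA _ _ genA] := A_gen lt_sk.
  by right; split => //; apply: genA; apply: Tor_mu_fj.
- case=> [//|s] /andP [_ le_sk] /=.
  have lt_sk : (s < k)%N by lia.
  have lt_k1k : (k.-1 < k)%N by lia.
  have [_ TorA _ _] := A_gen lt_sk; have [_ _ _ genA] := A_gen lt_k1k.
  by apply: genA; apply: Tor_leq J_closed _ _ _ _ TorA; lia.
- case=> [//|s] t _ rangeT; rewrite /gen_r /=.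
  have lt_stk : (s + t < k)%N by lia.
  have [small _] := RR_red (leq_ltn_trans (leq_addr t s) lt_stk).
  have [_ _ sizeA _] := A_gen lt_stk.
  have : (size (RR s (s + t)) < size (A (s + t)))%N by apply: small; lia.
  by size_lia.
- case=> [//|i] rangei _ [//|t] rangeT; rewrite /gen_r /gen_a /=.
  have -> : (t + (i.+1 - t.+1) = i)%N by lia.
  have lt_tk : (t < k)%N by lia.
  by have [small _] := RR_red lt_tk; apply: small; lia.
Qed.

Lemma J_gen_elt i : (1 <= i <= k)%N -> J (gen_elt k gen_a gen_r i).
Proof. by case: i => [//|s] /= lt_sk; rewrite gen_elt_generator //; case: (RR_red lt_sk). Qed.

Lemma J_iff_in_gen_ideal h : J h <-> in_gen_ideal Theta fj gen_a gen_r h.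
Proof.
split => [Jh|[c [q ->]]].
  have Jh0 : J (u ^+ 0 *: h) by rewrite expr0 scale1r.
  have [c ec] := J_span_generators (leq0n k) Jh0.
  exists (fun i => c i.-1), 0; rewrite skmul0l addr0 -[h]scale1r -(expr0 u) ec big_add1 /=.
  by apply: eq_big_nat => i /andP [_ lt_ik]; rewrite gen_elt_generator.
apply: JD; last exact/JM/J_fj.
rewrite big_seq; apply: (big_ind J); [exact: J0 | exact: JD |] => i.
by rewrite mem_index_iota => range_i; apply/JM/J_gen_elt.
Qed.

Lemma gen_r_unique lj r' : canonical_data Theta fj lj gen_a r' ->
  (forall h, J h <-> in_gen_ideal Theta fj gen_a r' h) ->
  forall i t, (1 <= i)%N -> (1 <= t <= k - i)%N -> r' i t = gen_r i t.
Proof.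
move=> [_ _ _ small_r'] J_r' [//|s] t _ rangeT.
have lt_sk : (s < k)%N by lia.
have J_gen' : J (gen_elt k gen_a r' s.+1).
  apply/J_r'; exists (fun i => (i == s.+1)%:R), 0; rewrite skmul0l addr0.
  rewrite (bigD1_seq s.+1) ?mem_index_iota ?iota_uniq //= eqxx skmul1l big1 ?addr0 //.
  by move=> i /negPf ->; rewrite skmul0l.
pose d T := gen_r s.+1 (T - s)%N - r' s.+1 (T - s)%N.
have Jd : J (\sum_(s.+1 <= T < k) u ^+ T *: emb (d T)).
  have J_gen : J (gen_elt k gen_a gen_r s.+1) by apply: J_gen_elt; lia.
  move: (JB J_gen J_gen'); rewrite !gen_eltE //.
  rewrite opprD addrACA subrr add0r -sumrB.
  by under eq_bigr do rewrite -scalerBr -emb_polyB.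
have small_d T : (s.+1 <= T < k)%N -> (size (d T) < size (A T))%N.
  move=> /andP [lt_sT lt_Tk]; rewrite /d (leq_ltn_trans (size_polyD _ _)) // size_polyN gtn_max.
  have [small _] := RR_red lt_sk.
  rewrite /gen_r /= (subnKC (ltnW lt_sT)) small; last by rewrite lt_sT lt_Tk.
  have [/monic_neq0 A_neq0 _ _ _] := A_gen lt_Tk.
  by apply: (small_r' T.+1) => //; lia.
have range_st : (s.+1 <= s + t < k)%N by lia.
have /eqP := J_sum_vanish lt_sk Jd small_d range_st.
by rewrite /d addKn subr_eq0 eq_sym => /eqP.
Qed.
End StructureTheorem.

Theorem theorem3p2
  (p m k n s : nat) (F : finFieldType)
  (hp : prime p) (hpodd : odd p) (hm : (1 <= m)%N) (hk : (1 <= k)%N)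
  (hn : (1 <= n)%N) (hs : (1 <= s)%N) (hnp : coprime n p)
  (hF : #|F| = (p ^ m)%N)
  (Theta : {rmorphism Rk F k -> Rk F k}) (hTbij : bijective Theta)
  (hTord : forall a, iter (n * p ^ s) Theta a = a)
  (lambda : Rk F k) (hlu : lambda \is a GRing.unit) (hlfix : Theta lambda = lambda)
  (f : {poly Rk F k}) (j : nat) (hj : (1 <= j)%N)
  (hfmon : f \is monic) (hfirr : skirreducible Theta f)
  (hfdiv : rdivides Theta f ('X^(n * p ^ s) - lambda%:P))
  (hfjc : skcentral Theta (skpow Theta f j))
  (hfjdiv : rdivides Theta (skpow Theta f j) ('X^(n * p ^ s) - lambda%:P))
  (J : {poly Rk F k} -> Prop)
  (hJ : left_ideal_over Theta (skpow Theta f j) J) :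
  let l := (size f).-1 in
  exists (a : nat -> {poly F}) (r : nat -> nat -> {poly F}),
    [/\ canonical_data Theta (skpow Theta f j) (l * j) a r,
        (forall h, J h <-> in_gen_ideal Theta (skpow Theta f j) a r h) &
        (forall r' : nat -> nat -> {poly F},
           canonical_data Theta (skpow Theta f j) (l * j) a r' ->
           (forall h, J h <-> in_gen_ideal Theta (skpow Theta f j) a r' h) ->
           forall i t, (1 <= i)%N -> (1 <= t <= k - i)%N -> r' i t = r i t)].
Proof.
move=> l.
have [monic_fj size_fj] := skpow_monic_size (rmorph0 Theta) (rmorph1 Theta) j hfmon.
have size_mu_fj : (size (mu_poly (skpow Theta f j)) <= (l * j).+1)%N.
  by rewrite -size_fj; apply: size_poly.
have [A A_gen] := exists_torsion_generators hk hTbij monic_fj hJ.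
have [RR RR_red] := exists_reduced_generators hk hTbij monic_fj hJ A_gen.
exists (gen_a A), (gen_r RR); split.
- exact: (canonical_data_gen hk monic_fj hJ A_gen RR_red size_mu_fj).
- exact: (J_iff_in_gen_ideal hk hTbij monic_fj hJ A_gen RR_red).
- exact: (gen_r_unique hk monic_fj hJ A_gen RR_red).
Qed.
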